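(* Assume the prime-tuple hypothesis. Then there exist infinite sets $A, B \subset \mathbb{Z}$ such that $A+B=\{a+b : a\in A,\ b\in B\}$ is exactly the set of all integers $\pm p$ with $p$ a (positive) prime and $p>3$; moreover, every such signed prime $r$ has exactly one representation as $r=a+b$ with $a\in A$, $b\in B$.
   Context: Prime-tuple hypothesis: for any finitely many pairs of integers $a_i, b_i$ with $a_i\neq 0$, there are infinitely many integers $x$ such that all the numbers $a_ix+b_i$ are prime, unless there is a prime $p$ such that for every integer $x$ we have $p \mid a_ix+b_i$ for some $i$. *)

From Stdlib Require Import ZArith List Znumtheory.
Open Scope Z_scope.

Definition finite_Zset (S : Z -> Prop) : Prop :=
  exists l : list Z, forall x, S x -> In x l.
Definition infinite_Zset (S : Z -> Prop) : Prop := ~ finite_Zset S.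

Definition Zprime_signed (n : Z) : Prop := prime (Z.abs n).

Definition prime_tuple_hypothesis : Prop :=
  forall l : list (Z * Z),
    (forall ab, In ab l -> fst ab <> 0) ->
    (exists p, prime p /\
       forall x : Z, exists ab, In ab l /\ (p | fst ab * x + snd ab))
    \/ infinite_Zset (fun x => forall ab, In ab l -> Zprime_signed (fst ab * x + snd ab)).

Definition signed_prime_gt3 (r : Z) : Prop :=
  exists p, prime p /\ 3 < p /\ (r = p \/ r = - p).

From Stdlib Require Import ZArith List Znumtheory Lia Bool Setoid Permutation Factorial
  Classical ClassicalEpsilon.
Import ListNotations.
Open Scope Z_scope.

(* A and B are unions of increasing finite lists whose sums are signed primes > 3, each
   represented once.  Round n adds a huge x to A, together with r - x to B when the n-th
   integer r is a signed prime > 3 not yet represented, and then a huge y to B; being huge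
   keeps all sums distinct.  Such x and y exist by the prime-tuple hypothesis applied to the
   forms x + b and a + r - x (resp. a + y), provided no prime p divides one of the forms for
   every x.  For p larger than the number of forms this is a counting argument.  For the
   smaller p we maintain an invariant at p which provides a residue class for the new
   element keeping every new form prime to p, and which survives the addition.  The
   invariant reserves residues for the targets p and - p, the only sums p may divide; when a
   prime enters the controlled range it is set up from an element of A free for B mod p. *)

(** * Congruences and linear forms modulo a prime *)

Definition congruent (q a b : Z) : Prop := (q | a - b).

#[global] Instance congruent_equivalence q : Equivalence (congruent q).
Proof.
  split; unfold congruent.
  - intro a. rewrite Z.sub_diag. apply Z.divide_0_r.
  - intros a b H. replace (b - a) with (- (a - b)) by ring. now apply Z.divide_opp_r.
  - intros a b c H1 H2. replace (a - c) with ((a - b) + (b - c)) by ring.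
    now apply Z.divide_add_r.
Qed.

Add Parametric Morphism q : Z.add
  with signature congruent q ==> congruent q ==> congruent q as congruent_add.
Proof.
  unfold congruent. intros a a' Ha b b' Hb.
  replace (a + b - (a' + b')) with ((a - a') + (b - b')) by ring. now apply Z.divide_add_r.
Qed.

Add Parametric Morphism q : Z.sub
  with signature congruent q ==> congruent q ==> congruent q as congruent_sub.
Proof.
  unfold congruent. intros a a' Ha b b' Hb.
  replace (a - b - (a' - b')) with ((a - a') - (b - b')) by ring. now apply Z.divide_sub_r.
Qed.

Add Parametric Morphism q : Z.mul
  with signature congruent q ==> congruent q ==> congruent q as congruent_mul.
Proof.
  unfold congruent. intros a a' Ha b b' Hb.
  replace (a * b - a' * b') with ((a - a') * b + a' * (b - b')) by ring.
  apply Z.divide_add_r; [apply Z.divide_mul_l | apply Z.divide_mul_r]; assumption.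
Qed.

Add Parametric Morphism q : (Z.divide q)
  with signature congruent q ==> iff as divide_congruent.
Proof.
  unfold congruent. intros a a' H. split; intro Hd.
  - replace a' with (a - (a - a')) by ring. now apply Z.divide_sub_r.
  - replace a with ((a - a') + a') by ring. now apply Z.divide_add_r.
Qed.

Lemma congruent_divide d m a b : (d | m) -> congruent m a b -> congruent d a b.
Proof. intros Hd H. exact (Z.divide_trans _ _ _ Hd H). Qed.

Lemma congruent_mod q a : q <> 0 -> congruent q a (a mod q).
Proof.
  intro Hq. exists (a / q). rewrite (Z.div_mod a q Hq) at 1. ring.
Qed.

Lemma congruent_small_eq p t t' : 0 <= t < p -> 0 <= t' < p -> congruent p t t' -> t = t'.
Proof.
  intros Ht Ht' [k Hk]. destruct (Z.lt_trichotomy k 0) as [Hk0 | [-> | Hk0]]; nia.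
Qed.

Lemma prime_not_divide_small p n : prime p -> 0 < n < p -> ~ (p | n).
Proof. intros Hp Hn Hd. apply Z.divide_pos_le in Hd; lia. Qed.

Lemma linear_root_unique p m d t t' : prime p -> ~ (p | m) ->
  (p | m * t + d) -> (p | m * t' + d) -> congruent p t t'.
Proof.
  intros Hp Hm H H'.
  assert (Hd : (p | m * (t - t'))).
  { replace (m * (t - t')) with ((m * t + d) - (m * t' + d)) by ring.
    now apply Z.divide_sub_r. }
  destruct (prime_mult p Hp _ _ Hd); [contradiction | assumption].
Qed.

(* Each form kills at most one of the points 0, ..., length L, so one point survives. *)
Lemma linear_forms_avoid p (L : list (Z * Z)) : prime p ->
  Forall (fun md => ~ (p | fst md)) L -> Z.of_nat (length L) < p ->
  exists t, Forall (fun md => ~ (p | fst md * t + snd md)) L.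
Proof.
  intros Hp Hm Hlen. apply NNPP. intro Hnone.
  set (T := map Z.of_nat (seq 0 (S (length L)))).
  assert (HT : forall t, In t T -> 0 <= t < p).
  { intros t Ht. apply in_map_iff in Ht as (k & <- & Hk). apply in_seq in Hk. lia. }
  assert (Hkill : Forall (fun t => Exists (fun md => (p | fst md * t + snd md)) L) T).
  { apply Forall_forall. intros t _. apply NNPP. intro Ht. apply Hnone. exists t.
    apply Forall_forall. intros md Hmd Hd. apply Ht, Exists_exists. eauto. }
  destruct (Permutation_pigeonhole_rel _ Hkill) as (t & t' & T' & Hperm & md & Hmd & Ht & Ht').
  { unfold T. rewrite length_map, length_seq. lia. }
  assert (HND : NoDup (t :: t' :: T')).
  { apply (Permutation_NoDup Hperm). apply FinFun.Injective_map_NoDup; [|apply seq_NoDup].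
    intros k k' E. lia. }
  assert (Htt' : t = t').
  { apply (congruent_small_eq p); [apply HT .. |].
    - apply (Permutation_in _ (Permutation_sym Hperm)). now left.
    - apply (Permutation_in _ (Permutation_sym Hperm)). right. now left.
    - rewrite Forall_forall in Hm. exact (linear_root_unique _ _ _ _ _ Hp (Hm md Hmd) Ht Ht'). }
  inversion HND as [|? ? Hnin]. apply Hnin. rewrite Htt'. now left.
Qed.

Lemma prime_divide_fact p K : prime p -> (p | Z.of_nat (fact K)) <-> p <= Z.of_nat K.
Proof.
  intro Hp. pose proof (prime_ge_2 p Hp).
  induction K as [|K IH]; cbn [fact].
  - split; [intro Hd; apply Z.divide_1_r_nonneg in Hd; lia | lia].
  - rewrite Nat2Z.inj_mul. split.
    + intro Hd. destruct (prime_mult p Hp _ _ Hd) as [Hd' | Hd'].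
      * apply Z.divide_pos_le in Hd'; lia.
      * apply IH in Hd'. lia.
    + intro Hle. destruct (Z.eq_dec p (Z.of_nat (S K))) as [-> | Hne].
      * apply Z.divide_mul_l, Z.divide_refl.
      * apply Z.divide_mul_r, IH. lia.
Qed.

Lemma chinese_remainder_pair m n a b : rel_prime m n ->
  exists c, congruent m c a /\ congruent n c b.
Proof.
  intros Hmn. destruct (rel_prime_bezout _ _ Hmn) as [u v Huv].
  assert (E : u * m = 1 - v * n) by lia.
  exists (a + (b - a) * (u * m)). split.
  - exists ((b - a) * u). ring.
  - exists (- (b - a) * v). rewrite E. ring.
Qed.

Lemma chinese_remainder_primes (K : nat) (Q : Z -> Z -> Prop) :
  (forall q, prime q -> q <= Z.of_nat K -> exists c, forall x, congruent q x c -> Q q x) ->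
  exists c0, forall q, prime q -> q <= Z.of_nat K -> forall x, congruent q x c0 -> Q q x.
Proof.
  induction K as [|K IH]; intros Hloc.
  - exists 0. intros q Hq Hle. pose proof (prime_ge_2 q Hq). lia.
  - destruct IH as [c0 Hc0].
    { intros q Hq Hle. apply Hloc; [exact Hq | lia]. }
    destruct (classic (prime (Z.of_nat (S K)))) as [Hp | Hp].
    + destruct (Hloc _ Hp (Z.le_refl _)) as [c Hc].
      assert (Hcop : rel_prime (Z.of_nat (fact K)) (Z.of_nat (S K))).
      { apply rel_prime_sym, prime_rel_prime; [exact Hp |].
        rewrite (prime_divide_fact _ _ Hp). lia. }
      destruct (chinese_remainder_pair _ _ c0 c Hcop) as (c1 & Hc1 & Hc1').
      exists c1. intros q Hq Hle x Hx.
      destruct (Z.eq_dec q (Z.of_nat (S K))) as [-> | Hne].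
      * apply Hc. now rewrite Hx.
      * apply Hc0; [exact Hq | lia |]. rewrite Hx.
        apply (congruent_divide _ _ _ _ (proj2 (prime_divide_fact q K Hq) ltac:(lia)) Hc1).
    + exists c0. intros q Hq Hle. apply Hc0; [exact Hq |].
      destruct (Z.eq_dec q (Z.of_nat (S K))) as [-> | Hne]; [contradiction | lia].
Qed.

(** * Applying the prime-tuple hypothesis *)

Lemma infinite_Zset_unbounded (S : Z -> Prop) N :
  infinite_Zset S -> exists x, S x /\ N < Z.abs x.
Proof.
  intros Hinf. apply NNPP. intro Hbnd. apply Hinf.
  exists (map (fun k => Z.of_nat k - Z.abs N) (seq 0 (Z.to_nat (2 * Z.abs N + 1)))).
  intros x Hx. apply in_map_iff. exists (Z.to_nat (x + Z.abs N)).
  assert (Z.abs x <= N) by (apply Z.nlt_ge; intro; apply Hbnd; eauto).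
  split; [lia |]. apply in_seq. lia.
Qed.

Lemma list_abs_bound (l : list Z) : exists N, 0 <= N /\ forall z, In z l -> Z.abs z <= N.
Proof.
  induction l as [| a l (N & HN0 & HN)]; [now exists 0 |].
  exists (Z.max (Z.abs a) N). split; [lia |].
  intros z [<- | Hz]; [lia |]. specialize (HN z Hz). lia.
Qed.

Lemma unbounded_infinite_Zset (S : Z -> Prop) :
  (forall N, exists x, S x /\ N < Z.abs x) -> infinite_Zset S.
Proof.
  intros Hunb [l Hl]. destruct (list_abs_bound l) as (N & _ & HN).
  destruct (Hunb N) as (x & Hx & Hbig). specialize (HN x (Hl x Hx)). lia.
Qed.

Lemma signed_prime_gt3_intro r : prime (Z.abs r) -> ~ (2 | r) -> ~ (3 | r) -> signed_prime_gt3 r.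
Proof.
  intros Hp H2 H3. exists (Z.abs r). split; [exact Hp |]. split; [| lia].
  pose proof (prime_ge_2 _ Hp).
  assert (Z.abs r <> 2) by (intro E; apply H2, Z.divide_abs_r; rewrite E; apply Z.divide_refl).
  assert (Z.abs r <> 3) by (intro E; apply H3, Z.divide_abs_r; rewrite E; apply Z.divide_refl).
  lia.
Qed.

Lemma signed_prime_gt3_abs r : signed_prime_gt3 r -> 3 < Z.abs r.
Proof. intros (p & _ & Hp3 & [-> | ->]); lia. Qed.

Lemma signed_prime_gt3_divide q r : prime q -> signed_prime_gt3 r -> (q | r) ->
  3 < q /\ (r = q \/ r = - q).
Proof.
  intros Hq (p & Hp & Hp3 & Hr) Hd.
  assert (Hqp : (q | p)) by (destruct Hr as [-> | ->]; [| apply Z.divide_opp_r]; exact Hd).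
  rewrite (prime_div_prime _ _ Hq Hp Hqp). lia.
Qed.

Definition unit_forms (L : list (Z * Z)) : Prop := Forall (fun md => fst md = 1 \/ fst md = -1) L.

Section PrimeTuples.

Hypothesis PTH : prime_tuple_hypothesis.

(* The substitution x = K! t + c turns the forms into forms covered by no prime:
   primes p <= K because of the class of c, larger ones by [linear_forms_avoid]. *)
Lemma prime_tuple_in_class (K : nat) (L : list (Z * Z)) c N :
  unit_forms L -> (length L <= K)%nat ->
  (forall q, prime q -> q <= Z.of_nat K -> Forall (fun md => ~ (q | fst md * c + snd md)) L) ->
  exists x, N < Z.abs x /\ congruent (Z.of_nat (fact K)) x c /\
    Forall (fun md => Zprime_signed (fst md * x + snd md)) L.
Proof.
  intros Hunit Hlen Hloc. unfold unit_forms in Hunit.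
  set (M := Z.of_nat (fact K)).
  assert (HM : 1 <= M) by (pose proof (lt_O_fact K); lia).
  set (l := map (fun md => (fst md * M, fst md * c + snd md)) L).
  destruct (PTH l) as [(p & Hp & Hcov) | Hinf].
  - intros ab Hab. apply in_map_iff in Hab as (md & <- & Hmd). rewrite Forall_forall in Hunit.
    cbn [fst]. destruct (Hunit md Hmd) as [-> | ->]; lia.
  - exfalso. destruct (Z.le_gt_cases p (Z.of_nat K)) as [Hle | Hgt].
    + destruct (Hcov 0) as (ab & Hab & Hd). apply in_map_iff in Hab as (md & <- & Hmd).
      specialize (Hloc p Hp Hle). rewrite Forall_forall in Hloc. apply (Hloc md Hmd).
      cbn [fst snd] in Hd. now rewrite Z.mul_0_r, Z.add_0_l in Hd.
    + destruct (linear_forms_avoid p l Hp) as [t Ht].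
      * unfold l. rewrite Forall_map. refine (Forall_impl _ _ Hunit).
        intros md Hmd Hd. cbn [fst] in Hd.
        assert (HpM : (p | M)).
        { destruct Hmd as [E | E]; rewrite E in Hd; [now rewrite Z.mul_1_l in Hd |].
          replace (-1 * M) with (- M) in Hd by ring. now apply Z.divide_opp_r. }
        apply (prime_divide_fact p K Hp) in HpM. lia.
      * unfold l. rewrite length_map. lia.
      * destruct (Hcov t) as (ab & Hab & Hd). rewrite Forall_forall in Ht. exact (Ht ab Hab Hd).
  - destruct (infinite_Zset_unbounded _ (N + Z.abs c) Hinf) as (t & Ht & Hbig).
    exists (M * t + c). split; [| split].
    + assert (Z.abs t <= Z.abs (M * t)) by (rewrite Z.abs_mul; nia). lia.
    + exists t. ring.
    + apply Forall_forall. intros md Hmd.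
      replace (fst md * (M * t + c) + snd md) with (fst md * M * t + (fst md * c + snd md)) by ring.
      apply (Ht (fst md * M, fst md * c + snd md)), in_map_iff. eauto.
Qed.

Lemma prime_tuple_solution (K : nat) (L : list (Z * Z)) (Good : Z -> Z -> Prop) N :
  (3 <= K)%nat -> unit_forms L -> (length L <= K)%nat ->
  (forall q, prime q -> q <= Z.of_nat K -> exists c, forall x, congruent q x c ->
     Good q x /\ Forall (fun md => ~ (q | fst md * x + snd md)) L) ->
  exists x, N < Z.abs x /\ Forall (fun md => signed_prime_gt3 (fst md * x + snd md)) L /\
    forall q, prime q -> q <= Z.of_nat K -> Good q x.
Proof.
  intros HK Hunit Hlen Hloc.
  destruct (chinese_remainder_primes K _ Hloc) as [c Hc].
  destruct (prime_tuple_in_class K L c N Hunit Hlen) as (x & Hbig & Hxc & Hprime).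
  { intros q Hq HqK. exact (proj2 (Hc q Hq HqK c (reflexivity c))). }
  assert (Hx : forall q, prime q -> q <= Z.of_nat K -> Good q x /\
                 Forall (fun md => ~ (q | fst md * x + snd md)) L).
  { intros q Hq HqK. apply (Hc q Hq HqK).
    apply (congruent_divide _ _ _ _ (proj2 (prime_divide_fact q K Hq) HqK) Hxc). }
  exists x. split; [exact Hbig | split; [| intros q Hq HqK; apply Hx; assumption]].
  destruct (Hx 2 prime_2 ltac:(lia)) as [_ H2], (Hx 3 prime_3 ltac:(lia)) as [_ H3].
  rewrite Forall_forall in *. intros md Hmd.
  apply signed_prime_gt3_intro; [apply Hprime | apply H2 | apply H3]; exact Hmd.
Qed.

End PrimeTuples.

(** * Admissibility at a prime *)

(* Proves [~ (q | v)] from [H : ~ (q | u)] when [v = u] or [v = - u] is a ring identity. *)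
Ltac not_divide_ring H :=
  let Hd := fresh "Hd" in
  unfold congruent in H |- *; intro Hd; apply H;
  match goal with |- (?q | ?u) => match type of Hd with (q | ?v) =>
    first [ replace u with v by ring; exact Hd
          | replace u with (- v) by ring; now apply Z.divide_opp_r ] end end.

Lemma unit_not_divide q : prime q -> ~ (q | 1) /\ ~ (q | -1).
Proof.
  intros Hq. pose proof (prime_ge_2 q Hq).
  split; intro Hd; [| apply Z.divide_opp_r in Hd]; apply Z.divide_pos_le in Hd; lia.
Qed.

Lemma unit_forms_not_divide q L : prime q -> unit_forms L -> Forall (fun md => ~ (q | fst md)) L.
Proof.
  intros Hq Hunit. refine (Forall_impl _ _ Hunit).
  intros md [-> | ->]; apply (unit_not_divide q Hq).
Qed.

Definition represented (A B : list Z) (s : Z) : Prop :=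
  exists a b, In a A /\ In b B /\ a + b = s.

Lemma represented_incl A B A' B' s :
  incl A A' -> incl B B' -> represented A B s -> represented A' B' s.
Proof. intros HA HB (a & b & Ha & Hb & E). exists a, b. auto. Qed.

Definition partner (tr : option Z) (x : Z) : list Z :=
  match tr with Some r => [r - x] | None => [] end.

Lemma in_partner tr x b : In b (partner tr x) -> exists r, tr = Some r /\ b = r - x.
Proof. destruct tr as [r |]; cbn; [intros [<- | []]; eauto | intros []]. Qed.

Lemma in_snoc {T : Type} (x y : T) l : In x (l ++ [y]) <-> In x l \/ x = y.
Proof. rewrite in_app_iff. cbn. intuition. Qed.

Definition new_sums (P : Z -> Prop) (A B : list Z) (tr : option Z) (x : Z) : Prop :=
  (forall b, In b B -> P (x + b)) /\ (forall r a, tr = Some r -> In a A -> P (a + (r - x))).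

(* The residues in [F] avoid [A] and [- B]; they are kept for the targets [q] and [- q],
   the only sums that [q] may divide.  [spare_shift] says that for every class [rho] prime
   to [q], a new element of [A] may be put in the class of some [a] while its partner
   [rho - a] avoids [- A] and [- F]. *)
Record spare_residues (q : Z) (A B F : list Z) : Prop := {
  spare_distinct : ForallOrdPairs (fun f g => ~ congruent q f g) F;
  spare_not_A : forall f a, In f F -> In a A -> ~ congruent q a f;
  spare_not_negB : forall f b, In f F -> In b B -> ~ (q | f + b);
  spare_two : 3 < q -> ~ represented A B q -> ~ represented A B (- q) -> (2 <= length F)%nat;
  spare_one : 3 < q -> ~ represented A B q \/ ~ represented A B (- q) -> (1 <= length F)%nat;
  spare_shift : forall rho, ~ (q | rho) -> exists a, In a A /\
    (forall b, In b B -> ~ (q | a + b)) /\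
    (forall a', In a' A -> ~ (q | a' + (rho - a))) /\
    (forall f, In f F -> ~ (q | f + (rho - a)))
}.

Definition admissible (q : Z) (A B : list Z) : Prop := exists F, spare_residues q A B F.

Lemma spare_counts_incl q A B A' B' F : incl A A' -> incl B B' -> spare_residues q A B F ->
  (3 < q -> ~ represented A' B' q -> ~ represented A' B' (- q) -> (2 <= length F)%nat) /\
  (3 < q -> ~ represented A' B' q \/ ~ represented A' B' (- q) -> (1 <= length F)%nat).
Proof.
  intros HA HB HF. split.
  - intros Hq3 H1 H2. apply (spare_two _ _ _ _ HF Hq3);
      [contradict H1 | contradict H2]; eapply represented_incl; eassumption.
  - intros Hq3 H. apply (spare_one _ _ _ _ HF Hq3).
    destruct H as [H | H]; [left | right]; contradict H; eapply represented_incl; eassumption.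
Qed.

Lemma spare_extend_B q A B F : prime q -> spare_residues q A B F ->
  exists c, forall y, congruent q y c ->
    (forall a, In a A -> ~ (q | a + y)) /\ spare_residues q A (B ++ [y]) F.
Proof.
  intros Hq HF.
  destruct (spare_shift _ _ _ _ HF 1) as (a & Ha & HaB & HaA & HaF);
    [apply (unit_not_divide q Hq) |].
  exists (1 - a). intros y Hy. split; [intros a' Ha'; rewrite Hy; auto |].
  destruct (spare_counts_incl q A B A (B ++ [y]) F (incl_refl A) (incl_appl _ (incl_refl B)) HF).
  constructor; try apply HF; try assumption.
  - intros f b Hf Hb. apply in_snoc in Hb as [Hb | ->]; [now apply HF | rewrite Hy; auto].
  - intros rho Hrho. destruct (spare_shift _ _ _ _ HF rho Hrho) as (a2 & Ha2 & H2B & H2A & H2F).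
    exists a2. repeat split; auto.
    intros b Hb. apply in_snoc in Hb as [Hb | ->]; [auto | rewrite Hy; auto].
Qed.

Lemma spare_extend_A_shift q A B F tr : prime q -> spare_residues q A B F ->
  (forall r, tr = Some r -> ~ (q | r)) ->
  exists c, forall x, congruent q x c ->
    new_sums (fun v => ~ (q | v)) A B tr x /\ spare_residues q (A ++ [x]) (B ++ partner tr x) F.
Proof.
  intros Hq HF Htr.
  set (rho := match tr with Some r => r | None => 1 end).
  assert (Hrho : ~ (q | rho)).
  { unfold rho. destruct tr as [r |]; [now apply Htr | apply (unit_not_divide q Hq)]. }
  assert (Hpartner : forall x b, In b (partner tr x) -> b = rho - x).
  { intros x b Hb. apply in_partner in Hb as (r & Er & ->). unfold rho. now rewrite Er. }
  destruct (spare_shift _ _ _ _ HF rho Hrho) as (a & Ha & HaB & HaA & HaF).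
  exists a. intros x Hx. split; [split |].
  - intros b Hb. rewrite Hx. auto.
  - intros r a' Er Ha'. rewrite Hx. unfold rho in HaA. rewrite Er in HaA. auto.
  - destruct (spare_counts_incl q A B (A ++ [x]) (B ++ partner tr x) F
                (incl_appl _ (incl_refl A)) (incl_appl _ (incl_refl B)) HF).
    constructor; try apply HF; try assumption.
    + intros f a' Hf Ha'. apply in_snoc in Ha' as [Ha' | ->]; [now apply HF | rewrite Hx; now apply HF].
    + intros f b Hf Hb. apply in_app_or in Hb as [Hb | Hb]; [now apply HF |].
      rewrite (Hpartner x b Hb), Hx. auto.
    + intros rho' Hrho'. destruct (spare_shift _ _ _ _ HF rho' Hrho') as (a2 & Ha2 & H2B & H2A & H2F).
      exists a2. repeat split; [apply in_or_app; now left | | | exact H2F].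
      * intros b Hb. apply in_app_or in Hb as [Hb | Hb]; [auto |].
        rewrite (Hpartner x b Hb), Hx. auto.
      * intros a' Ha'. apply in_snoc in Ha' as [Ha' | ->]; [auto | rewrite Hx; auto].
Qed.

(* A target [r = q] or [r = - q] is placed on a spare residue [f], which is then used up. *)
Lemma spare_extend_A_target q A B f F r : 3 < q -> (r = q \/ r = - q) ->
  ~ represented A B r -> spare_residues q A B (f :: F) ->
  forall x, congruent q x f ->
    new_sums (fun v => ~ (q | v)) A B (Some r) x /\ spare_residues q (A ++ [x]) (B ++ [r - x]) F.
Proof.
  intros Hq3 Hrq Hnrep HF x Hx.
  assert (Hr0 : congruent q r 0).
  { unfold congruent. rewrite Z.sub_0_r. destruct Hrq as [-> | ->];
      [apply Z.divide_refl | apply Z.divide_opp_r, Z.divide_refl]. }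
  pose proof (spare_distinct _ _ _ _ HF) as Hdist.
  inversion Hdist as [| ? ? Hf Hdist']. subst.
  assert (Hfx : forall g, In g F -> ~ congruent q x g).
  { intros g Hg. rewrite Hx. now apply (proj1 (Forall_forall _ _) Hf). }
  assert (Hnew : represented (A ++ [x]) (B ++ [r - x]) r).
  { exists x, (r - x). rewrite !in_snoc. repeat split; auto. ring. }
  split; [split |].
  - intros b Hb. rewrite Hx. apply HF; [now left | exact Hb].
  - intros r' a [= <-] Ha. rewrite Hx, Hr0. apply (spare_not_A _ _ _ _ HF f a (or_introl eq_refl)) in Ha.
    not_divide_ring Ha.
  - constructor.
    + exact Hdist'.
    + intros g a Hg Ha. apply in_snoc in Ha as [Ha | ->]; [apply HF; [now right | exact Ha] | auto].
    + intros g b Hg Hb. apply in_snoc in Hb as [Hb | ->]; [apply HF; [now right | exact Hb] |].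
      rewrite Hx, Hr0. specialize (Hfx g Hg). rewrite Hx in Hfx. not_divide_ring Hfx.
    + intros _ H1 H2. exfalso. destruct Hrq as [-> | ->]; [apply H1 | apply H2]; exact Hnew.
    + intros _ Hone.
      assert (Hold : forall s, ~ represented (A ++ [x]) (B ++ [r - x]) s -> ~ represented A B s).
      { intros s Hs Hrep. apply Hs. revert Hrep. apply represented_incl; apply incl_appl, incl_refl. }
      assert (Hboth : ~ represented A B q /\ ~ represented A B (- q)).
      { destruct Hrq as [-> | ->], Hone as [H | H];
          solve [contradiction | split; [exact Hnrep | now apply Hold]
                 | split; [now apply Hold | exact Hnrep]]. }
      pose proof (spare_two _ _ _ _ HF Hq3 (proj1 Hboth) (proj2 Hboth)). cbn in *. lia.
    + intros rho Hrho. destruct (spare_shift _ _ _ _ HF rho Hrho) as (a & Ha & HaB & HaA & HaF).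
      exists a. repeat split; [apply in_or_app; now left | | | intros g Hg; apply HaF; now right].
      * intros b Hb. apply in_snoc in Hb as [Hb | ->]; [auto |].
        rewrite Hx, Hr0. pose proof (spare_not_A _ _ _ _ HF f a (or_introl eq_refl) Ha) as Haf.
        not_divide_ring Haf.
      * intros a' Ha'. apply in_snoc in Ha' as [Ha' | ->]; [auto |].
        rewrite Hx. apply HaF. now left.
Qed.

Lemma admissible_extend_A q A B tr : prime q -> admissible q A B ->
  (forall r, tr = Some r -> signed_prime_gt3 r /\ ~ represented A B r) ->
  exists c, forall x, congruent q x c ->
    new_sums (fun v => ~ (q | v)) A B tr x /\ admissible q (A ++ [x]) (B ++ partner tr x).
Proof.
  intros Hq [F HF] Htr.
  destruct (classic (exists r, tr = Some r /\ (q | r))) as [(r & -> & Hqr) | Hnot].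
  - destruct (Htr r eq_refl) as [Hr Hnrep].
    destruct (signed_prime_gt3_divide q r Hq Hr Hqr) as [Hq3 Hrq].
    destruct F as [| f F].
    + exfalso. assert (H := spare_one _ _ _ _ HF Hq3). cbn in H.
      destruct Hrq as [-> | ->]; [specialize (H (or_introl Hnrep)) | specialize (H (or_intror Hnrep))]; lia.
    + exists f. intros x Hx.
      destruct (spare_extend_A_target q A B f F r Hq3 Hrq Hnrep HF x Hx) as [H1 H2].
      split; [exact H1 | now exists F].
  - destruct (spare_extend_A_shift q A B F tr Hq HF) as [c Hc]; [intros r Er Hd; eauto |].
    exists c. intros x Hx. destruct (Hc x Hx) as [H1 H2]. split; [exact H1 | now exists F].
Qed.

Lemma admissible_extend_B q A B : prime q -> admissible q A B ->
  exists c, forall y, congruent q y c ->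
    (forall a, In a A -> ~ (q | a + y)) /\ admissible q A (B ++ [y]).
Proof.
  intros Hq [F HF]. destruct (spare_extend_B q A B F Hq HF) as [c Hc].
  exists c. intros y Hy. destruct (Hc y Hy) as [H1 H2]. split; [exact H1 | now exists F].
Qed.

Lemma exists_free_residue q W B : prime q -> Z.of_nat (length W + length B) < q ->
  exists f, (forall w, In w W -> ~ congruent q w f) /\ (forall b, In b B -> ~ (q | f + b)).
Proof.
  intros Hq Hlen.
  set (L := map (fun w => (-1, w)) W ++ map (fun b => (1, b)) B).
  destruct (linear_forms_avoid q L Hq) as [f Hf].
  - apply unit_forms_not_divide; [exact Hq |].
    unfold unit_forms, L. rewrite Forall_app, !Forall_map.
    split; apply Forall_forall; auto.
  - unfold L. rewrite length_app, !length_map. lia.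
  - unfold L in Hf. rewrite Forall_app, !Forall_map, !Forall_forall in Hf. cbn [fst snd] in Hf.
    destruct Hf as [HW HB]. exists f. split.
    + intros w Hw. specialize (HW w Hw). not_divide_ring HW.
    + intros b Hb. specialize (HB b Hb). not_divide_ring HB.
Qed.

Lemma exists_spare_pair q A B : prime q -> Z.of_nat (length A + length B) + 1 < q ->
  exists f1 f2, ~ congruent q f1 f2 /\ forall f, In f [f1; f2] ->
    (forall a, In a A -> ~ congruent q a f) /\ (forall b, In b B -> ~ (q | f + b)).
Proof.
  intros Hq Hlen.
  destruct (exists_free_residue q A B Hq) as (f1 & H1A & H1B); [lia |].
  destruct (exists_free_residue q (f1 :: A) B Hq) as (f2 & H2A & H2B); [cbn; lia |].
  exists f1, f2. split; [apply H2A; now left |].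
  intros f [<- | [<- | []]]; split; auto. intros a Ha. apply H2A. now right.
Qed.

(* A class for a new element [x] of [A] at a prime [q] not yet controlled; [W] collects
   [A] and the spare residues, and [x0] is an element of [A] free for [B]. *)
Lemma exists_generic_residue q B W x0 tr : prime q -> 2 < q ->
  Z.of_nat (length B + 3 * length W + length W * length W) < q ->
  exists c, forall x, congruent q x c ->
    (forall b, In b B -> ~ (q | x + b)) /\
    (forall r w, tr = Some r -> In w W -> ~ (q | w + (r - x))) /\
    (forall w, In w W -> ~ congruent q w x) /\
    (forall w, In w W -> ~ (q | x + (x - w - x0))) /\
    (forall w w', In w W -> In w' W -> ~ (q | w' + (x - w - x0))).
Proof.
  intros Hq Hq2 Hlen.
  set (Ltr := match tr with Some r => map (fun w => (-1, w + r)) W | None => [] end).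
  set (L := map (fun b => (1, b)) B ++ Ltr ++ map (fun w => (-1, w)) W ++
            map (fun w => (2, - w - x0)) W ++
            map (fun ww => (1, fst ww - snd ww - x0)) (list_prod W W)).
  destruct (linear_forms_avoid q L Hq) as [c Hc].
  - assert (H2 : ~ (q | 2)) by (apply prime_not_divide_small; [exact Hq | lia]).
    destruct (unit_not_divide q Hq) as [H1 Hm1].
    unfold L, Ltr. destruct tr; rewrite !Forall_app, !Forall_map;
      repeat split; apply Forall_forall; cbn; auto; tauto.
  - unfold L. rewrite !length_app, !length_map, length_prod.
    assert (length Ltr <= length W)%nat by (unfold Ltr; destruct tr; cbn; rewrite ?length_map; lia).
    lia.
  - exists c. intros x Hx.
    assert (HL : Forall (fun md => ~ (q | fst md * x + snd md)) L).
    { refine (Forall_impl _ _ Hc). intros md Hmd. now rewrite Hx. }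
    unfold L in HL. rewrite !Forall_app, !Forall_map in HL. cbn [fst snd] in HL.
    rewrite !Forall_forall in HL. destruct HL as (HB & HT & HW & H2 & HWW).
    repeat split.
    + intros b Hb. specialize (HB b Hb). not_divide_ring HB.
    + intros r w Er Hw. unfold Ltr in HT. rewrite Er in HT.
      specialize (HT _ (in_map (fun w => (-1, w + r)) W w Hw)). cbn [fst snd] in HT.
      not_divide_ring HT.
    + intros w Hw. specialize (HW w Hw). not_divide_ring HW.
    + intros w Hw. specialize (H2 w Hw). not_divide_ring H2.
    + intros w w' Hw Hw'. specialize (HWW (w', w) (in_prod _ _ _ _ Hw' Hw)). cbn [fst snd] in HWW.
      not_divide_ring HWW.
Qed.

Section NewPrime.

Variables (q x0 x f1 f2 : Z) (A B : list Z) (tr : option Z).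
Let W := A ++ [f1; f2].
Hypothesis Hx0 : In x0 A.
Hypothesis Hx0B : forall b, In b B -> ~ (q | x0 + b).
Hypothesis Htr : forall r, tr = Some r -> ~ (q | r).
Hypothesis H12 : ~ congruent q f1 f2.
Hypothesis Hf : forall f, In f [f1; f2] ->
  (forall a, In a A -> ~ congruent q a f) /\ (forall b, In b B -> ~ (q | f + b)).
Hypothesis HxB : forall b, In b B -> ~ (q | x + b).
Hypothesis HxT : forall r w, tr = Some r -> In w W -> ~ (q | w + (r - x)).
Hypothesis HxW : forall w, In w W -> ~ congruent q w x.
Hypothesis Hx2 : forall w, In w W -> ~ (q | x + (x - w - x0)).
Hypothesis HxWW : forall w w', In w W -> In w' W -> ~ (q | w' + (x - w - x0)).

Let in_W_A a : In a A -> In a W.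
Proof. intro Ha. apply in_app_iff. now left. Qed.

Let in_W_F f : In f [f1; f2] -> In f W.
Proof. intro Hf'. apply in_app_iff. now right. Qed.

(* [x] is the shifted element unless [x - rho] is congruent to some [w] in [W]; then [x0] is. *)
Lemma spare_new_prime_shift rho : ~ (q | rho) -> exists a, In a (A ++ [x]) /\
  (forall b, In b (B ++ partner tr x) -> ~ (q | a + b)) /\
  (forall a', In a' (A ++ [x]) -> ~ (q | a' + (rho - a))) /\
  (forall f, In f [f1; f2] -> ~ (q | f + (rho - a))).
Proof.
  intros Hrho.
  destruct (classic (exists w, In w W /\ (q | w + (rho - x)))) as [(w & Hw & Hd) | Hno].
  - assert (Hrhow : congruent q rho (x - w)).
    { unfold congruent. replace (rho - (x - w)) with (w + (rho - x)) by ring. exact Hd. }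
    exists x0. repeat split.
    + apply in_app_iff. now left.
    + intros b Hb. apply in_app_or in Hb as [Hb | Hb]; [auto |].
      apply in_partner in Hb as (r & Er & ->). apply (HxT r x0 Er), in_W_A, Hx0.
    + intros a' Ha'. rewrite Hrhow. apply in_snoc in Ha' as [Ha' | ->].
      * apply HxWW; [exact Hw | apply in_W_A, Ha'].
      * apply Hx2, Hw.
    + intros f Hf'. rewrite Hrhow. apply HxWW; [exact Hw | apply in_W_F, Hf'].
  - exists x. repeat split.
    + apply in_snoc. now right.
    + intros b Hb. apply in_app_or in Hb as [Hb | Hb]; [auto |].
      apply in_partner in Hb as (r & Er & ->). replace (x + (r - x)) with r by ring. auto.
    + intros a' Ha' Hd. apply in_snoc in Ha' as [Ha' | ->].
      * apply Hno. exists a'. split; [apply in_W_A, Ha' | exact Hd].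
      * apply Hrho. now replace rho with (x + (rho - x)) by ring.
    + intros f Hf' Hd. apply Hno. exists f. split; [apply in_W_F, Hf' | exact Hd].
Qed.

Lemma spare_new_prime : spare_residues q (A ++ [x]) (B ++ partner tr x) [f1; f2].
Proof.
  constructor.
  - repeat constructor. exact H12.
  - intros f a Hf' Ha. apply in_snoc in Ha as [Ha | ->]; [now apply (proj1 (Hf f Hf')) |].
    intro Hc. apply (HxW f); [apply in_W_F, Hf' | now symmetry].
  - intros f b Hf' Hb. apply in_app_or in Hb as [Hb | Hb]; [now apply (proj2 (Hf f Hf')) |].
    apply in_partner in Hb as (r & Er & ->). apply (HxT r f Er), in_W_F, Hf'.
  - cbn. lia.
  - cbn. lia.
  - exact spare_new_prime_shift.
Qed.

End NewPrime.

Lemma admissible_new_prime q A B tr x0 : prime q -> In x0 A ->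
  (forall b, In b B -> ~ (q | x0 + b)) -> (forall r, tr = Some r -> ~ (q | r)) ->
  Z.of_nat (length B + 3 * (length A + 2) + (length A + 2) * (length A + 2)) < q ->
  exists c, forall x, congruent q x c ->
    new_sums (fun v => ~ (q | v)) A B tr x /\ admissible q (A ++ [x]) (B ++ partner tr x).
Proof.
  intros Hq Hx0 Hx0B Htr Hlen.
  destruct (exists_spare_pair q A B Hq) as (f1 & f2 & H12 & Hf); [lia |].
  destruct (exists_generic_residue q B (A ++ [f1; f2]) x0 tr Hq) as [c Hc];
    [pose proof (prime_ge_2 q Hq); lia | rewrite length_app; cbn [length]; lia |].
  exists c. intros x Hx. destruct (Hc x Hx) as (HxB & HxT & HxW & Hx2 & HxWW).
  split; [split |].
  - exact HxB.
  - intros r a Er Ha. apply (HxT r a Er), in_app_iff. now left.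
  - exists [f1; f2]. now apply (spare_new_prime q x0 x f1 f2 A B tr).
Qed.

(** * Rounds of the construction *)

Definition prime_sums (A B : list Z) : Prop :=
  forall a b, In a A -> In b B -> signed_prime_gt3 (a + b).

Definition unique_sums (A B : list Z) : Prop :=
  forall a b a' b', In a A -> In b B -> In a' A -> In b' B -> a + b = a' + b' -> a = a' /\ b = b'.

(* Only the sums [q] and [- q] are divisible by [q], and each has one representation. *)
Lemma exists_free_element q A B a1 a2 a3 : prime q -> prime_sums A B -> unique_sums A B ->
  In a1 A -> In a2 A -> In a3 A -> a1 <> a2 -> a1 <> a3 -> a2 <> a3 ->
  exists x0, In x0 A /\ forall b, In b B -> ~ (q | x0 + b).
Proof.
  intros Hq Hs Hu H1 H2 H3 N12 N13 N23. apply NNPP. intro Hno.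
  assert (Hall : forall a, In a A -> exists b, In b B /\ (a + b = q \/ a + b = - q)).
  { intros a Ha. apply NNPP. intro Hb. apply Hno. exists a. split; [exact Ha |].
    intros b Hb' Hd. apply Hb. exists b.
    exact (conj Hb' (proj2 (signed_prime_gt3_divide q _ Hq (Hs a b Ha Hb') Hd))). }
  destruct (Hall a1 H1) as (b1 & Hb1 & E1), (Hall a2 H2) as (b2 & Hb2 & E2),
    (Hall a3 H3) as (b3 & Hb3 & E3).
  assert (a1 + b1 <> a2 + b2) by (intro E; apply N12, (Hu a1 b1 a2 b2); auto).
  assert (a1 + b1 <> a3 + b3) by (intro E; apply N13, (Hu a1 b1 a3 b3); auto).
  assert (a2 + b2 <> a3 + b3) by (intro E; apply N23, (Hu a2 b2 a3 b3); auto).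
  lia.
Qed.

Lemma unique_sums_snoc_l A B x : unique_sums A B ->
  (forall a b b', In a A -> In b B -> In b' B -> x + b <> a + b') -> unique_sums (A ++ [x]) B.
Proof.
  intros Hu Hx a b a' b' Ha Hb Ha' Hb' E.
  apply in_snoc in Ha as [Ha | ->], Ha' as [Ha' | ->].
  - auto.
  - exfalso. apply (Hx a b' b); auto.
  - exfalso. apply (Hx a' b b'); auto.
  - split; [reflexivity | lia].
Qed.

Lemma unique_sums_snoc_r A B y : unique_sums A B ->
  (forall a a' b, In a A -> In a' A -> In b B -> a + y <> a' + b) -> unique_sums A (B ++ [y]).
Proof.
  intros Hu Hy a b a' b' Ha Hb Ha' Hb' E.
  apply in_snoc in Hb as [Hb | ->], Hb' as [Hb' | ->].
  - auto.
  - exfalso. apply (Hy a' a b); auto.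
  - exfalso. apply (Hy a a' b'); auto.
  - split; [lia | reflexivity].
Qed.

Definition enum_Z (n : nat) : Z :=
  let m := Z.of_nat n in if Z.even m then m / 2 else - (m / 2).

Lemma enum_Z_surjective z : exists n, enum_Z n = z.
Proof.
  destruct (Z.le_gt_cases 0 z).
  - exists (Z.to_nat (2 * z)). unfold enum_Z. rewrite Z2Nat.id, Z.even_even by lia.
    now rewrite Z.mul_comm, Z.div_mul by lia.
  - exists (Z.to_nat (2 * - z + 1)). unfold enum_Z. rewrite Z2Nat.id by lia.
    rewrite Z.even_add, Z.even_even. change (Z.even 1) with false. cbn [eqb].
    replace (2 * - z + 1) with (1 + (- z) * 2) by ring. rewrite Z.div_add by lia.
    change (1 / 2) with 0. lia.
Qed.

Lemma enum_Z_abs n : Z.abs (enum_Z n) <= Z.of_nat n.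
Proof.
  unfold enum_Z. pose proof (Z.div_pos (Z.of_nat n) 2).
  pose proof (Z.div_le_upper_bound (Z.of_nat n) 2 (Z.of_nat n)).
  destruct (Z.even (Z.of_nat n)); lia.
Qed.

(* The six sums 293, 283, 347, 337, 5, -5 are primes > 3, the seed is admissible at every
   prime up to [control_bound 0] ([seed_admissible]), and [A0] has the three elements
   needed by [exists_free_element]. *)
Definition A0 : list Z := [0; 54; -288].
Definition B0 : list Z := [293; 283].

(* Primes up to [control_bound n] are controlled at round [n]; the bound exceeds both the
   number of forms and the bound of [admissible_new_prime] for lists of the sizes below. *)
Definition control_bound (n : nat) : nat := ((n + 8) * (n + 8))%nat.

Record stage (maxA maxB K ntargets : nat) (A B : list Z) : Prop := {
  stage_sums : prime_sums A B;
  stage_unique : unique_sums A B;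
  stage_lenA : (length A <= maxA)%nat;
  stage_lenB : (length B <= maxB)%nat;
  stage_admissible : forall q, prime q -> q <= Z.of_nat K -> admissible q A B;
  stage_targets : forall m, (m < ntargets)%nat -> signed_prime_gt3 (enum_Z m) ->
    represented A B (enum_Z m);
  stage_seed : incl A0 A
}.

Arguments stage_sums {maxA maxB K ntargets A B}.
Arguments stage_unique {maxA maxB K ntargets A B}.
Arguments stage_lenA {maxA maxB K ntargets A B}.
Arguments stage_lenB {maxA maxB K ntargets A B}.
Arguments stage_admissible {maxA maxB K ntargets A B}.
Arguments stage_targets {maxA maxB K ntargets A B}.
Arguments stage_seed {maxA maxB K ntargets A B}.

Definition round_start (n : nat) : list Z -> list Z -> Prop :=
  stage (n + 3) (2 * n + 2) (control_bound n) n.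

Definition round_middle (n : nat) : list Z -> list Z -> Prop :=
  stage (n + 4) (2 * n + 3) (control_bound (S n)) (S n).

Definition target_choice (n : nat) (A B : list Z) (tr : option Z) : Prop :=
  match tr with
  | Some r => r = enum_Z n /\ signed_prime_gt3 r /\ ~ represented A B r
  | None => signed_prime_gt3 (enum_Z n) -> represented A B (enum_Z n)
  end.

Lemma target_choice_exists n A B : exists tr, target_choice n A B tr.
Proof.
  destruct (classic (signed_prime_gt3 (enum_Z n) -> represented A B (enum_Z n))) as [H | H].
  - now exists None.
  - exists (Some (enum_Z n)). cbn. apply imply_to_and in H. tauto.
Qed.

Definition step_forms (A B : list Z) (tr : option Z) : list (Z * Z) :=
  map (fun b => (1, b)) B ++
  match tr with Some r => map (fun a => (-1, a + r)) A | None => [] end.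

Lemma step_forms_new_sums (P : Z -> Prop) A B tr x :
  Forall (fun md => P (fst md * x + snd md)) (step_forms A B tr) <-> new_sums P A B tr x.
Proof.
  assert (E : forall a r, -1 * x + (a + r) = a + (r - x)) by (intros; ring).
  unfold step_forms, new_sums. rewrite Forall_app, Forall_map, Forall_forall. cbn [fst snd].
  setoid_rewrite Z.mul_1_l.
  destruct tr as [r |].
  - rewrite Forall_map, Forall_forall. cbn [fst snd]. setoid_rewrite E.
    split; intros [H1 H2]; split; auto. intros r' a [= <-]. auto.
  - split; intros [H1 H2]; split; auto. discriminate.
Qed.

Lemma step_forms_unit A B tr : unit_forms (step_forms A B tr).
Proof.
  unfold unit_forms, step_forms. rewrite Forall_app, Forall_map.
  split; [apply Forall_forall; auto |].
  destruct tr; [rewrite Forall_map; apply Forall_forall; auto | constructor].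
Qed.

Lemma step_forms_length A B tr : (length (step_forms A B tr) <= length A + length B)%nat.
Proof.
  unfold step_forms. rewrite length_app, length_map.
  destruct tr; cbn; rewrite ?length_map; lia.
Qed.

Lemma prime_sums_extend_A A B tr x : prime_sums A B -> new_sums signed_prime_gt3 A B tr x ->
  (forall r, tr = Some r -> signed_prime_gt3 r) -> prime_sums (A ++ [x]) (B ++ partner tr x).
Proof.
  intros Hs [HB HT] Hr a b Ha Hb.
  apply in_app_or in Hb as [Hb | Hb].
  - apply in_snoc in Ha as [Ha | ->]; auto.
  - apply in_partner in Hb as (r & Er & ->).
    apply in_snoc in Ha as [Ha | ->]; [auto | replace (x + (r - x)) with r by ring; auto].
Qed.

Lemma unique_sums_extend_A A B tr x M : unique_sums A B ->
  (forall z, In z (A ++ B) -> Z.abs z <= M) ->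
  (forall r, tr = Some r -> Z.abs r <= M /\ ~ represented A B r) ->
  4 * M < Z.abs x -> unique_sums (A ++ [x]) (B ++ partner tr x).
Proof.
  intros Hu HS Htr Hx.
  assert (HA : forall a, In a A -> Z.abs a <= M) by (intros; apply HS, in_or_app; auto).
  assert (HB : forall b, In b B -> Z.abs b <= M) by (intros; apply HS, in_or_app; auto).
  assert (HuA : unique_sums (A ++ [x]) B).
  { apply unique_sums_snoc_l; [exact Hu |]. intros a b b' Ha Hb Hb'.
    pose proof (HA a Ha). pose proof (HB b Hb). pose proof (HB b' Hb'). lia. }
  destruct tr as [r |]; cbn [partner]; [| now rewrite app_nil_r].
  destruct (Htr r eq_refl) as [Hr Hnrep].
  apply unique_sums_snoc_r; [exact HuA |]. intros a a' b Ha Ha' Hb E.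
  pose proof (HB b Hb).
  apply in_snoc in Ha as [Ha | ->], Ha' as [Ha' | ->].
  - pose proof (HA a Ha). pose proof (HA a' Ha'). lia.
  - pose proof (HA a Ha). lia.
  - apply Hnrep. exists a', b. repeat split; auto. lia.
  - lia.
Qed.

Lemma represented_extend_A n A B tr x m : (m < S n)%nat ->
  (forall m, (m < n)%nat -> signed_prime_gt3 (enum_Z m) -> represented A B (enum_Z m)) ->
  target_choice n A B tr -> signed_prime_gt3 (enum_Z m) ->
  represented (A ++ [x]) (B ++ partner tr x) (enum_Z m).
Proof.
  intros Hm Hold Htr Hr.
  assert (Hincl : forall s, represented A B s -> represented (A ++ [x]) (B ++ partner tr x) s)
    by (intro s; apply represented_incl; apply incl_appl, incl_refl).
  destruct (Nat.eq_dec m n) as [-> | Hne]; [| apply Hincl, Hold; [lia | exact Hr]].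
  destruct tr as [r |]; cbn in Htr; [| now apply Hincl, Htr].
  destruct Htr as (<- & _ & _). exists x, (r - x). cbn [partner]. rewrite !in_snoc.
  repeat split; auto. ring.
Qed.

Section Rounds.

Hypothesis PTH : prime_tuple_hypothesis.

Lemma admissible_step_A n A B tr q : round_start n A B -> target_choice n A B tr ->
  prime q -> q <= Z.of_nat (control_bound (S n)) ->
  exists c, forall x, congruent q x c ->
    admissible q (A ++ [x]) (B ++ partner tr x) /\
    Forall (fun md => ~ (q | fst md * x + snd md)) (step_forms A B tr).
Proof.
  intros HI Htr Hq HqK.
  cut (exists c, forall x, congruent q x c ->
         new_sums (fun v => ~ (q | v)) A B tr x /\ admissible q (A ++ [x]) (B ++ partner tr x)).
  { intros [c Hc]. exists c. intros x Hx. rewrite (step_forms_new_sums (fun v => ~ (q | v))).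
    now apply and_comm, Hc. }
  destruct (Z.le_gt_cases q (Z.of_nat (control_bound n))) as [Hold | Hnew].
  - apply admissible_extend_A; [exact Hq | now apply (stage_admissible HI) |].
    intros r Er. rewrite Er in Htr. destruct Htr as (_ & Hr & Hnrep). now split.
  - destruct (exists_free_element q A B 0 54 (-288) Hq (stage_sums HI) (stage_unique HI))
      as (x0 & Hx0 & Hx0B); [(apply (stage_seed HI); cbn; tauto) || lia .. |].
    apply (admissible_new_prime q A B tr x0 Hq Hx0 Hx0B).
    + intros r Er Hd. rewrite Er in Htr. destruct Htr as (-> & Hr & _).
      pose proof (enum_Z_abs n). pose proof (signed_prime_gt3_abs _ Hr).
      apply Z.divide_abs_r, Z.divide_pos_le in Hd; [| lia]. unfold control_bound in Hnew. lia.
    + pose proof (stage_lenA HI). pose proof (stage_lenB HI).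
      unfold control_bound in Hnew. nia.
Qed.

Lemma round_extend_A n A B tr : round_start n A B -> target_choice n A B tr ->
  exists x, round_middle n (A ++ [x]) (B ++ partner tr x) /\ Z.of_nat n < Z.abs x.
Proof.
  intros HI Htr.
  destruct (list_abs_bound (enum_Z n :: A ++ B)) as (M & HM & HS).
  assert (Hr : forall r, tr = Some r -> signed_prime_gt3 r /\ ~ represented A B r /\ Z.abs r <= M).
  { intros r Er. rewrite Er in Htr. destruct Htr as (-> & Hr & Hnrep). split; [exact Hr |].
    split; [exact Hnrep | apply HS; now left]. }
  pose proof (stage_lenA HI). pose proof (stage_lenB HI).
  destruct (prime_tuple_solution PTH (control_bound (S n)) (step_forms A B tr)
              (fun q x => admissible q (A ++ [x]) (B ++ partner tr x)) (4 * M + Z.of_nat n))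
    as (x & Hbig & Hprime & Hadm).
  - unfold control_bound. lia.
  - apply step_forms_unit.
  - pose proof (step_forms_length A B tr). unfold control_bound. lia.
  - intros q Hq HqK. exact (admissible_step_A n A B tr q HI Htr Hq HqK).
  - exists x. split; [| lia].
    apply step_forms_new_sums in Hprime. constructor.
    + apply prime_sums_extend_A; [apply HI | exact Hprime | intros r Er; apply Hr, Er].
    + apply (unique_sums_extend_A A B tr x M); [apply HI | intros z Hz; apply HS; now right | | lia].
      intros r Er. split; apply Hr, Er.
    + rewrite length_app. cbn. lia.
    + rewrite length_app. destruct tr; cbn; lia.
    + exact Hadm.
    + intros m Hm. apply (represented_extend_A n); [exact Hm | apply HI | exact Htr].
    + apply incl_appl, HI.
Qed.

Lemma round_extend_B n A B : round_middle n A B ->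
  exists y, round_start (S n) A (B ++ [y]) /\ Z.of_nat n < Z.abs y.
Proof.
  intros HI.
  destruct (list_abs_bound (A ++ B)) as (M & HM & HS).
  assert (HA : forall a, In a A -> Z.abs a <= M) by (intros; apply HS, in_or_app; auto).
  assert (HB : forall b, In b B -> Z.abs b <= M) by (intros; apply HS, in_or_app; auto).
  set (L := map (fun a => (1, a)) A).
  assert (HL : forall (P : Z -> Prop) y,
             Forall (fun md => P (fst md * y + snd md)) L <-> forall a, In a A -> P (a + y)).
  { intros P y. unfold L. rewrite Forall_map, Forall_forall. cbn [fst snd].
    setoid_rewrite Z.mul_1_l. setoid_rewrite Z.add_comm at 1. reflexivity. }
  pose proof (stage_lenA HI). pose proof (stage_lenB HI).
  destruct (prime_tuple_solution PTH (control_bound (S n)) L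
              (fun q y => admissible q A (B ++ [y])) (3 * M + Z.of_nat n))
    as (y & Hbig & Hprime & Hadm).
  - unfold control_bound. lia.
  - unfold unit_forms, L. rewrite Forall_map. apply Forall_forall. auto.
  - unfold L, control_bound. rewrite length_map. lia.
  - intros q Hq HqK.
    destruct (admissible_extend_B q A B Hq (stage_admissible HI q Hq HqK)) as [c Hc].
    exists c. intros y Hy. destruct (Hc y Hy) as [H1 H2]. split; [exact H2 | now apply (HL (fun v => ~ (q | v)))].
  - exists y. split; [| lia]. rewrite HL in Hprime. constructor.
    + intros a b Ha Hb. apply in_snoc in Hb as [Hb | ->]; [now apply HI | auto].
    + apply unique_sums_snoc_r; [apply HI |]. intros a a' b Ha Ha' Hb.
      pose proof (HA a Ha). pose proof (HA a' Ha'). pose proof (HB b Hb). lia.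
    + lia.
    + rewrite length_app. cbn. lia.
    + exact Hadm.
    + intros m Hm Hr. apply (represented_incl A B); [apply incl_refl | apply incl_appl, incl_refl |].
      apply HI; [exact Hm | exact Hr].
    + apply HI.
Qed.

Definition round_progress (n : nat) (s s' : list Z * list Z) : Prop :=
  incl (fst s) (fst s') /\ incl (snd s) (snd s') /\
  (exists x, In x (fst s') /\ Z.of_nat n < Z.abs x) /\
  (exists y, In y (snd s') /\ Z.of_nat n < Z.abs y).

Lemma next_round n s : round_start n (fst s) (snd s) ->
  exists s', round_start (S n) (fst s') (snd s') /\ round_progress n s s'.
Proof.
  destruct s as [A B]. cbn. intros HI.
  destruct (target_choice_exists n A B) as [tr Htr].
  destruct (round_extend_A n A B tr HI Htr) as (x & HM & Hx).
  destruct (round_extend_B n _ _ HM) as (y & HS & Hy).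
  exists (A ++ [x], (B ++ partner tr x) ++ [y]). split; [exact HS |].
  repeat split; cbn.
  - apply incl_appl, incl_refl.
  - do 2 apply incl_appl. apply incl_refl.
  - exists x. rewrite in_snoc. now split; [right |].
  - exists y. rewrite in_snoc. now split; [right |].
Qed.

End Rounds.

(** * The seed *)

Definition dvdb (q u : Z) : bool := u mod q =? 0.

Lemma not_dvdb q u : q <> 0 -> negb (dvdb q u) = true -> ~ (q | u).
Proof.
  unfold dvdb. intros Hq H Hd. apply (Z.mod_divide _ _ Hq) in Hd. now rewrite Hd in H.
Qed.

Definition primeb (p : Z) : bool :=
  (1 <? p) && forallb (fun d => negb (dvdb d p)) (map Z.of_nat (seq 2 (Z.to_nat p - 2))).

Lemma primeb_spec p : primeb p = true <-> prime p.
Proof.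
  unfold primeb. rewrite <- prime_alt, andb_true_iff, Z.ltb_lt, forallb_forall. unfold prime'.
  split; intros [Hp H]; split; auto.
  - intros n Hn. apply (not_dvdb n p); [lia |]. apply H, in_map_iff.
    exists (Z.to_nat n). split; [lia | apply in_seq; lia].
  - intros d Hd. apply in_map_iff in Hd as (k & <- & Hk). apply in_seq in Hk.
    apply negb_true_iff, Z.eqb_neq. intro E.
    apply (H (Z.of_nat k)); [lia | apply Z.mod_divide; [lia | exact E]].
Qed.

Definition representedb (A B : list Z) (s : Z) : bool :=
  existsb (fun a => existsb (fun b => a + b =? s) B) A.

Lemma representedb_sound A B s : representedb A B s = true -> represented A B s.
Proof.
  unfold representedb. rewrite existsb_exists. intros (a & Ha & H).
  apply existsb_exists in H as (b & Hb & E). apply Z.eqb_eq in E. now exists a, b.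
Qed.

Fixpoint incongruent_pairsb (q : Z) (F : list Z) : bool :=
  match F with
  | [] => true
  | f :: F' => forallb (fun g => negb (dvdb q (f - g))) F' && incongruent_pairsb q F'
  end.

Lemma incongruent_pairsb_sound q F : q <> 0 -> incongruent_pairsb q F = true ->
  ForallOrdPairs (fun f g => ~ congruent q f g) F.
Proof.
  intros Hq. induction F as [| f F IH]; cbn; [constructor |].
  rewrite andb_true_iff, forallb_forall. intros [Hf HF]. constructor; [| auto].
  apply Forall_forall. intros g Hg. apply not_dvdb; auto.
Qed.

Definition residues (q : Z) : list Z := map Z.of_nat (seq 1 (Z.to_nat q - 1)).

Definition spare_residuesb (q : Z) (A B F : list Z) : bool :=
  incongruent_pairsb q F &&
  forallb (fun f => forallb (fun a => negb (dvdb q (a - f))) A &&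
                    forallb (fun b => negb (dvdb q (f + b))) B) F &&
  ((q <=? 3) || representedb A B q || representedb A B (- q) || (2 <=? length F)%nat) &&
  ((q <=? 3) || (representedb A B q && representedb A B (- q)) || (1 <=? length F)%nat) &&
  forallb (fun rho => existsb (fun a =>
     forallb (fun b => negb (dvdb q (a + b))) B &&
     forallb (fun a' => negb (dvdb q (a' + (rho - a)))) A &&
     forallb (fun f => negb (dvdb q (f + (rho - a)))) F) A) (residues q).

(* The shift condition only depends on the class of [rho], so the classes [1 .. q - 1] suffice. *)
Lemma spare_residuesb_sound q A B F : 0 < q -> spare_residuesb q A B F = true ->
  spare_residues q A B F.
Proof.
  intros Hq H. unfold spare_residuesb in H. rewrite !andb_true_iff in H.
  destruct H as ((((Hd & HF) & H2) & H1) & Hsh). rewrite forallb_forall in HF, Hsh.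
  assert (HF' : forall f, In f F ->
            (forall a, In a A -> ~ congruent q a f) /\ (forall b, In b B -> ~ (q | f + b))).
  { intros f Hf. specialize (HF f Hf). rewrite andb_true_iff, !forallb_forall in HF.
    split; intros; apply not_dvdb; [lia | apply HF; assumption | lia | apply HF; assumption]. }
  constructor.
  - apply incongruent_pairsb_sound; [lia | exact Hd].
  - intros f a Hf. apply HF', Hf.
  - intros f b Hf. apply HF', Hf.
  - intros Hq3 Hn Hn'. rewrite !orb_true_iff, Z.leb_le, Nat.leb_le in H2.
    destruct H2 as [[[H | H] | H] | H]; [lia | | | exact H];
      apply representedb_sound in H; contradiction.
  - intros Hq3 Hn. rewrite !orb_true_iff, andb_true_iff, Z.leb_le, Nat.leb_le in H1.
    destruct H1 as [[H | [H H']] | H]; [lia | | exact H].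
    apply representedb_sound in H. apply representedb_sound in H'. tauto.
  - intros rho Hrho.
    assert (Hin : In (rho mod q) (residues q)).
    { assert (rho mod q <> 0) by (intro E; apply Hrho, Z.mod_divide; lia).
      pose proof (Z.mod_pos_bound rho q Hq).
      apply in_map_iff. exists (Z.to_nat (rho mod q)). split; [lia | apply in_seq; lia]. }
    apply Hsh, existsb_exists in Hin as (a & Ha & Hc).
    rewrite !andb_true_iff, !forallb_forall in Hc. destruct Hc as [[HB HA] HF''].
    assert (Hmod := congruent_mod q rho ltac:(lia)).
    exists a. repeat split; [exact Ha | ..]; intros; try rewrite Hmod; apply not_dvdb; auto; lia.
Qed.

Fixpoint ordered_pairs (l : list Z) : list (list Z) :=
  match l with
  | [] => []
  | f :: l' => map (fun g => [f; g]) l' ++ ordered_pairs l'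
  end.

(* [find] rather than [existsb]: it stops at the first good candidate, whereas [existsb]
   evaluates every candidate under [vm_compute]. *)
Definition admissibleb (q : Z) (A B : list Z) : bool :=
  if find (spare_residuesb q A B) ([] :: ordered_pairs (residues q)) then true else false.

Lemma admissibleb_sound q A B : 0 < q -> admissibleb q A B = true -> admissible q A B.
Proof.
  unfold admissibleb. intros Hq. destruct (find _ _) as [F |] eqn:E; [| discriminate].
  intros _. exists F. apply find_some in E as [_ E]. now apply spare_residuesb_sound.
Qed.

Lemma seed_admissible q : prime q -> q <= 64 -> admissible q A0 B0.
Proof.
  intros Hq Hle. pose proof (prime_ge_2 q Hq). apply admissibleb_sound; [lia |].
  assert (Hcheck : forallb (fun q => negb (primeb q) || admissibleb q A0 B0)
                     (map Z.of_nat (seq 0 65)) = true) by (vm_compute; reflexivity).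
  rewrite forallb_forall in Hcheck.
  assert (Hin : In q (map Z.of_nat (seq 0 65))).
  { apply in_map_iff. exists (Z.to_nat q). split; [lia | apply in_seq; lia]. }
  specialize (Hcheck q Hin). apply primeb_spec in Hq. now rewrite Hq in Hcheck.
Qed.

Lemma signed_prime_gt3_of_primeb r : primeb (Z.abs r) = true -> 3 < Z.abs r ->
  signed_prime_gt3 r.
Proof.
  intros Hp H3. exists (Z.abs r). split; [now apply primeb_spec |]. split; [exact H3 | lia].
Qed.

Lemma seed_round_start : round_start 0 A0 B0.
Proof.
  constructor.
  - intros a b Ha Hb. apply signed_prime_gt3_of_primeb;
      cbn in Ha, Hb; destruct Ha as [<- | [<- | [<- | []]]], Hb as [<- | [<- | []]];
      (vm_compute; reflexivity) || lia.
  - intros a b a' b' Ha Hb Ha' Hb'. cbn in Ha, Hb, Ha', Hb'.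
    destruct Ha as [<- | [<- | [<- | []]]], Hb as [<- | [<- | []]],
      Ha' as [<- | [<- | [<- | []]]], Hb' as [<- | [<- | []]]; lia.
  - cbn. lia.
  - cbn. lia.
  - intros q Hq Hle. now apply seed_admissible.
  - intros m Hm. lia.
  - apply incl_refl.
Qed.

Lemma nat_dependent_choice {T : Type} (P : nat -> T -> Prop) (R : nat -> T -> T -> Prop) (t0 : T) :
  P 0%nat t0 -> (forall n t, P n t -> exists t', P (S n) t' /\ R n t t') ->
  exists f : nat -> T, forall n, P n (f n) /\ R n (f n) (f (S n)).
Proof.
  intros H0 Hstep.
  assert (next : forall n (t : {t | P n t}),
             {t' : {t' | P (S n) t'} | R n (proj1_sig t) (proj1_sig t')}).
  { intros n [t Ht].
    destruct (constructive_indefinite_description _ (Hstep n t Ht)) as [t' [Ht' HR]].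
    exact (exist _ (exist _ t' Ht') HR). }
  pose (g := fix g n : {t | P n t} :=
         match n as m return {t | P m t} with
         | O => exist _ t0 H0
         | S k => proj1_sig (next k (g k))
         end).
  exists (fun n => proj1_sig (g n)). intro n.
  exact (conj (proj2_sig (g n)) (proj2_sig (next n (g n)))).
Qed.

Lemma chain_eventually (g : nat -> list Z) z : (forall n, incl (g n) (g (S n))) ->
  (exists n, In z (g n)) -> exists N, forall m, (N <= m)%nat -> In z (g m).
Proof.
  intros Hg [N HN]. exists N. intros m Hm. induction Hm; [exact HN | now apply Hg].
Qed.

Definition limit_A (st : nat -> list Z * list Z) (a : Z) : Prop := exists n, In a (fst (st n)).
Definition limit_B (st : nat -> list Z * list Z) (b : Z) : Prop := exists n, In b (snd (st n)).

Section Limit.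

Variable st : nat -> list Z * list Z.
Hypothesis Hst : forall n,
  round_start n (fst (st n)) (snd (st n)) /\ round_progress n (st n) (st (S n)).

Lemma limit_common_stage a b a' b' : limit_A st a -> limit_B st b -> limit_A st a' ->
  limit_B st b' -> exists n, round_start n (fst (st n)) (snd (st n)) /\
    In a (fst (st n)) /\ In b (snd (st n)) /\ In a' (fst (st n)) /\ In b' (snd (st n)).
Proof.
  assert (HA : forall z, limit_A st z -> exists N, forall m, (N <= m)%nat -> In z (fst (st m))).
  { intro z. apply chain_eventually. intro n. exact (proj1 (proj2 (Hst n))). }
  assert (HB : forall z, limit_B st z -> exists N, forall m, (N <= m)%nat -> In z (snd (st m))).
  { intro z. apply chain_eventually. intro n. exact (proj1 (proj2 (proj2 (Hst n)))). }
  intros Ha Hb Ha' Hb'.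
  destruct (HA a Ha) as [N1 H1], (HB b Hb) as [N2 H2], (HA a' Ha') as [N3 H3], (HB b' Hb') as [N4 H4].
  exists (N1 + N2 + N3 + N4)%nat. split; [apply Hst |].
  repeat split; [apply H1 | apply H2 | apply H3 | apply H4]; lia.
Qed.

Lemma limit_A_infinite : infinite_Zset (limit_A st).
Proof.
  apply unbounded_infinite_Zset. intro N.
  destruct (Hst (Z.to_nat N)) as (_ & _ & _ & (x & Hx & Hbig) & _).
  exists x. split; [now exists (S (Z.to_nat N)) | lia].
Qed.

Lemma limit_B_infinite : infinite_Zset (limit_B st).
Proof.
  apply unbounded_infinite_Zset. intro N.
  destruct (Hst (Z.to_nat N)) as (_ & _ & _ & _ & (y & Hy & Hbig)).
  exists y. split; [now exists (S (Z.to_nat N)) | lia].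
Qed.

Lemma limit_sums a b : limit_A st a -> limit_B st b -> signed_prime_gt3 (a + b).
Proof.
  intros Ha Hb. destruct (limit_common_stage a b a b Ha Hb Ha Hb) as (n & Hn & Ha' & Hb' & _).
  exact (stage_sums Hn a b Ha' Hb').
Qed.

Lemma limit_covers r : signed_prime_gt3 r -> exists a b, limit_A st a /\ limit_B st b /\ r = a + b.
Proof.
  intros Hr. destruct (enum_Z_surjective r) as [m <-].
  destruct (stage_targets (proj1 (Hst (S m))) m (Nat.lt_succ_diag_r m) Hr) as (a & b & Ha & Hb & E).
  exists a, b. split; [now exists (S m) | split; [now exists (S m) | auto]].
Qed.

Lemma limit_unique a b a' b' : limit_A st a -> limit_B st b -> limit_A st a' -> limit_B st b' ->
  a + b = a' + b' -> a = a' /\ b = b'.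
Proof.
  intros Ha Hb Ha' Hb'.
  destruct (limit_common_stage a b a' b' Ha Hb Ha' Hb') as (n & Hn & H1 & H2 & H3 & H4).
  exact (stage_unique Hn a b a' b' H1 H2 H3 H4).
Qed.

End Limit.

Theorem theorem1 :
  prime_tuple_hypothesis ->
  exists A B : Z -> Prop,
    infinite_Zset A /\ infinite_Zset B /\
    (forall r, (exists a b, A a /\ B b /\ r = a + b) <-> signed_prime_gt3 r) /\
    (forall r, signed_prime_gt3 r ->
       forall a b a' b', A a -> B b -> A a' -> B b' ->
         r = a + b -> r = a' + b' -> a = a' /\ b = b').
Proof.
  intros PTH.
  destruct (nat_dependent_choice (fun n s => round_start n (fst s) (snd s)) round_progress
              (A0, B0) seed_round_start (next_round PTH)) as [st Hst].
  exists (limit_A st), (limit_B st).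
  split; [| split; [| split]].
  - exact (limit_A_infinite st Hst).
  - exact (limit_B_infinite st Hst).
  - intro r. split; [| apply (limit_covers st Hst)].
    intros (a & b & Ha & Hb & ->). exact (limit_sums st Hst a b Ha Hb).
  - intros r _ a b a' b' Ha Hb Ha' Hb' E E'.
    apply (limit_unique st Hst); [assumption .. | congruence].
Qed.
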